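(* Let $\mathbf{P_0},\mathbf{P_1}$ be $n\times n$ transition probability matrices of irreducible and aperiodic Markov chains on $n$ states, let $\mathbf{P_s}=(1-s)\mathbf{P_0}+s\mathbf{P_1}$ for $s\in[0,1]$, and let $\pi_s$ be the stationary distribution of $\mathbf{P_s}$. Then $s\mapsto\pi_s$ is continuous at $s=0$ with respect to the total variation norm. In particular, for $0<\epsilon<1/\sqrt{n}$, if $$\delta=\frac{\epsilon(1-\sqrt{n}\,\epsilon)}{4n^{3/2}\,t_{mix}(\epsilon/2)},$$ then $\|\pi_s-\pi_0\|_{TV}\le\epsilon/2$ for all $s\in[0,1]$ with $s\le\delta$.
   Context: Distributions are row vectors; $\|\mu-\nu\|_{TV}=\frac12\|\mu-\nu\|_1$. For an irreducible aperiodic transition matrix $\mathbf{P}$ with stationary distribution $\pi$, $t_{mix}(\mathbf{P},\epsilon)=\inf\{T\in\mathbb{N}: \|\nu\mathbf{P}^T-\pi\|_{TV}\le\epsilon \text{ for all distributions }\nu\}$, and $t_{mix}(\epsilon)=\sup_{s\in[0,1]}t_{mix}(\mathbf{P_s},\epsilon)$. *)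

From HB Require Import structures.
From mathcomp Require Import all_boot all_order all_algebra.
From mathcomp Require Import all_classical all_reals ereal.
Set Implicit Arguments. Unset Strict Implicit. Unset Printing Implicit Defensive.
Import Order.TTheory GRing.Theory Num.Theory.
Local Open Scope ring_scope.
Local Open Scope classical_set_scope.

Section MC.
Variable R : realType.
Variable n : nat.

Definition is_distr (mu : 'rV[R]_n) : Prop :=
  (forall i, 0 <= mu 0 i) /\ \sum_i mu 0 i = 1.

Definition stochastic (P : 'M[R]_n) : Prop :=
  (forall i j, 0 <= P i j) /\ (forall i, \sum_j P i j = 1).

Definition mpow (P : 'M[R]_n) (t : nat) : 'M[R]_n := iter t (fun M => M *m P) 1%:M.

Definition irreducible (P : 'M[R]_n) : Prop :=
  forall i j, exists t : nat, 0 < mpow P t i j.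

Definition aperiodic (P : 'M[R]_n) : Prop :=
  forall i (d : nat), (forall t : nat, (0 < t)%N -> 0 < mpow P t i i -> (d %| t)%N) -> d = 1%N.

Definition irred_aperiodic_chain (P : 'M[R]_n) : Prop :=
  stochastic P /\ irreducible P /\ aperiodic P.

Definition stationary (P : 'M[R]_n) (pi : 'rV[R]_n) : Prop :=
  is_distr pi /\ pi *m P = pi.

Definition tv (mu nu : 'rV[R]_n) : R := 2^-1 * \sum_i `|mu 0 i - nu 0 i|.

Definition mixed_by (P : 'M[R]_n) (eps : R) (T : nat) : Prop :=
  forall pi, stationary P pi ->
  forall nu, is_distr nu -> tv (nu *m mpow P T) pi <= eps.

(* t_mix(P, eps) = inf {T in N | ...}  (+oo if the set is empty) *)
Definition tmix (P : 'M[R]_n) (eps : R) : \bar R :=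
  ereal_inf [set (T%:R)%:E | T in mixed_by P eps].

Definition Pmix (P0 P1 : 'M[R]_n) (s : R) : 'M[R]_n := (1 - s) *: P0 + s *: P1.

(* t_mix(eps) = sup_{s in [0,1]} t_mix(P_s, eps) *)
Definition tmix_sup (P0 P1 : 'M[R]_n) (eps : R) : \bar R :=
  ereal_sup [set tmix (Pmix P0 P1 s) eps | s in [set s : R | 0 <= s <= 1]].

(* delta = eps (1 - sqrt n eps) / (4 n^{3/2} t_mix(eps/2)), as an extended real:
   +oo if t_mix(eps/2) = 0, 0 if t_mix(eps/2) = +oo *)
Definition delta (P0 P1 : 'M[R]_n) (eps : R) : \bar R :=
  match tmix_sup P0 P1 (eps / 2) with
  | EFin t => if t == 0 then +oo%E
              else (eps * (1 - Num.sqrt n%:R * eps) /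
                     (4 * (n%:R * Num.sqrt n%:R) * t))%:E
  | +oo%E => 0%:E
  | -oo%E => +oo%E
  end.

End MC.

From HB Require Import structures.
From mathcomp Require Import all_boot all_order all_algebra.
From mathcomp Require Import all_classical all_reals ereal.
From mathcomp Require Import ring lra.
Set Implicit Arguments. Unset Strict Implicit. Unset Printing Implicit Defensive.
Import Order.TTheory GRing.Theory Num.Theory.
Local Open Scope ring_scope.

(** For an irreducible stochastic [P] the only invariant row vector of total
    mass 0 is 0 (its positive part would be a nonnegative invariant vector,
    hence positive everywhere).  So [x (1 - P) = y, x 1 = 0] has at most one
    solution, [[1 - P | 1]] has a right inverse [N], and
    [pi_s - pi_0 = pi_s (P_s - P_0) N] is O(s) in l1.

    For the explicit bound, let [T] be a mixing time of [P_0] at accuracy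
    [eps/2] and split [pi_s - pi_0 = (pi_s P_s^T - pi_s P_0^T) + (pi_s - pi_0) P_0^T].
    Telescoping one-step perturbations bounds the first term by [2 s T] in l1,
    and [P_0^T] contracts mass-zero vectors by [eps], so
    [(1 - eps) |pi_s - pi_0|_1 <= 2 s T]. *)

Section StationaryPerturbation.
Variables (R : realType) (n : nat).
Implicit Types (P Q A B : 'M[R]_n) (u v w b mu : 'rV[R]_n).

Definition l1norm v : R := \sum_i `|v 0 i|.

Lemma l1norm_ge0 v : 0 <= l1norm v.
Proof. exact: sumr_ge0. Qed.

Lemma l1norm0 : l1norm 0 = 0.
Proof. by rewrite /l1norm big1 // => i _; rewrite mxE normr0. Qed.

Lemma l1normD u v : l1norm (u + v) <= l1norm u + l1norm v.
Proof.
rewrite /l1norm -big_split /=; apply: ler_sum => i _; rewrite mxE; exact: ler_normD.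
Qed.

Lemma tvE u v : tv u v = 2^-1 * l1norm (u - v).
Proof. by rewrite /tv /l1norm; congr (_ * _); apply: eq_bigr => i _; rewrite !mxE. Qed.

Lemma l1norm_distr v : is_distr v -> l1norm v = 1.
Proof. by case=> v0 v1; rewrite -v1; apply: eq_bigr => i _; rewrite ger0_norm. Qed.

Lemma l1norm_mulmx_le A v K :
  (forall i, \sum_j `|A i j| <= K) -> l1norm (v *m A) <= K * l1norm v.
Proof.
move=> hK; rewrite /l1norm.
apply: le_trans (_ : \sum_j \sum_i `|v 0 i| * `|A i j| <= _).
  apply: ler_sum => j _; rewrite mxE; apply: le_trans (ler_norm_sum _ _ _) _.
  by apply: ler_sum => i _; rewrite normrM.
rewrite exchange_big /= mulr_sumr; apply: ler_sum => i _.
by rewrite -mulr_sumr mulrC ler_wpM2r.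
Qed.

Lemma l1norm_stochastic_mulmx P v : stochastic P -> l1norm (v *m P) <= l1norm v.
Proof.
case=> P0 P1; rewrite -[leRHS]mul1r; apply: l1norm_mulmx_le => i.
by rewrite -(P1 i) le_eqVlt; apply/orP; left; apply/eqP/eq_bigr => j _; rewrite ger0_norm.
Qed.

Lemma mpowS P t : mpow P t.+1 = mpow P t *m P.
Proof. by []. Qed.

Lemma is_distr_mulmx P v : stochastic P -> is_distr v -> is_distr (v *m P).
Proof.
case=> P0 P1 [v0 v1]; split.
  by move=> j; rewrite mxE; apply: sumr_ge0 => i _; apply: mulr_ge0.
under eq_bigr do rewrite mxE.
by rewrite exchange_big /= -v1; apply: eq_bigr => i _; rewrite -mulr_sumr P1 mulr1.
Qed.

Lemma is_distr_mpow P v t : stochastic P -> is_distr v -> is_distr (v *m mpow P t).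
Proof.
move=> hP hv; elim: t => [|t IH]; first by rewrite mulmx1.
by rewrite mpowS mulmxA; apply: is_distr_mulmx.
Qed.

Lemma invariant_mpow P v t : v *m P = v -> v *m mpow P t = v.
Proof. by move=> hv; elim: t => [|t IH]; rewrite ?mulmx1 // mpowS mulmxA IH hv. Qed.

Lemma mpow_ge0 P t i j : stochastic P -> 0 <= mpow P t i j.
Proof.
case=> P0 _; elim: t i j => [|t IH] i j; first by rewrite mxE ler0n.
by rewrite mpowS mxE; apply: sumr_ge0 => k _; apply: mulr_ge0.
Qed.

Lemma stationary_mass0 P Q u v :
  stationary P u -> stationary Q v -> \sum_i (u - v) 0 i = 0.
Proof.
by case=> [[_ u1] _] [[_ v1] _]; under eq_bigr do rewrite !mxE; rewrite sumrB u1 v1 subrr.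
Qed.

Lemma invariant_normr P mu : stochastic P -> mu *m P = mu ->
  map_mx Num.norm mu *m P = map_mx Num.norm mu.
Proof.
case=> P0 P1 muP; set a := map_mx Num.norm mu.
have sub_inv k : a 0 k <= (a *m P) 0 k.
  rewrite [a 0 k]mxE -{1}muP !mxE; apply: le_trans (ler_norm_sum _ _ _) _.
  by apply: ler_sum => i _; rewrite mxE normrM (ger0_norm (P0 _ _)).
have mass : \sum_k (a *m P) 0 k = \sum_k a 0 k.
  under eq_bigr do rewrite mxE.
  by rewrite exchange_big /=; apply: eq_bigr => i _; rewrite -mulr_sumr P1 mulr1.
apply/matrixP => i k; rewrite (ord1 i); apply/eqP; rewrite -subr_eq0; apply/eqP.
apply: (@psumr_eq0P _ _ predT (fun k => (a *m P) 0 k - a 0 k)) => //.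
  by move=> k' _; rewrite subr_ge0.
by rewrite sumrB mass subrr.
Qed.

Lemma invariant_ge0_gt0 P b j k : stochastic P -> irreducible P -> b *m P = b ->
  (forall i, 0 <= b 0 i) -> 0 < b 0 j -> 0 < b 0 k.
Proof.
move=> hP hirr bP b0 bj; have [t hjk] := hirr j k.
rewrite -(invariant_mpow t bP) mxE (bigD1 j) //=.
apply: lt_le_trans (_ : 0 < b 0 j * mpow P t j k) _; first exact: mulr_gt0.
by rewrite lerDl; apply: sumr_ge0 => i _; apply: mulr_ge0 => //; apply: mpow_ge0.
Qed.

Lemma invariant_mass0_le0 P mu j : stochastic P -> irreducible P -> mu *m P = mu ->
  \sum_i mu 0 i = 0 -> mu 0 j <= 0.
Proof.
move=> hP hirr muP mu0; rewrite leNgt; apply/negP => muj.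
pose b := map_mx Num.norm mu + mu.
have bE i : b 0 i = `|mu 0 i| + mu 0 i by rewrite !mxE.
have bP : b *m P = b by rewrite mulmxDl invariant_normr ?muP.
have b0 i : 0 <= b 0 i.
  by rewrite bE -{2}[mu 0 i]opprK subr_ge0 -normrN ler_norm.
have bj : 0 < b 0 j by rewrite bE ger0_norm ?ltW //; lra.
have mu_gt0 k : 0 < mu 0 k.
  have := invariant_ge0_gt0 k hP hirr bP b0 bj; rewrite bE.
  by case: (lerP 0 (mu 0 k)) => mk; [rewrite ger0_norm | rewrite ltr0_norm]; lra.
move: mu0; rewrite (bigD1 j) //=.
have : 0 <= \sum_(i | i != j) mu 0 i by apply: sumr_ge0 => i _; apply: ltW.
lra.
Qed.

Lemma invariant_mass0_eq0 P mu : stochastic P -> irreducible P -> mu *m P = mu ->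
  \sum_i mu 0 i = 0 -> mu = 0.
Proof.
move=> hP hirr muP mu0; apply/matrixP => i k; rewrite (ord1 i) [RHS]mxE.
have NmuP : (- mu) *m P = - mu by rewrite mulNmx muP.
have Nmu0 : \sum_i (- mu) 0 i = 0.
  by under eq_bigr do rewrite mxE; rewrite sumrN mu0 oppr0.
have := invariant_mass0_le0 k hP hirr NmuP Nmu0; rewrite mxE oppr_le0 => mu_ge0.
by apply/eqP; rewrite eq_le mu_ge0 (invariant_mass0_le0 _ hP hirr muP mu0).
Qed.

Lemma row_free_stationary_system P : stochastic P -> irreducible P ->
  row_free (row_mx (1%:M - P) (const_mx 1 : 'M[R]_(n, 1))).
Proof.
move=> hP hirr; rewrite -kermx_eq0; apply/eqP/row_matrixP => i; rewrite row0.
set u := row i _.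
have : u *m row_mx (1%:M - P) (const_mx 1 : 'M[R]_(n, 1)) = 0.
  by apply/sub_kermxP; exact: row_sub.
rewrite mul_mx_row => /eqP; rewrite row_mx_eq0 => /andP[/eqP uP /eqP u1].
apply: invariant_mass0_eq0 hP hirr _ _.
  by move: uP; rewrite mulmxBr mulmx1 => /eqP; rewrite subr_eq0 => /eqP <-.
move/(congr1 (fun M : 'M[R]_1 => M 0 0)): u1; rewrite !mxE; apply: etrans.
by apply: eq_bigr => k _; rewrite [const_mx _ _ _]mxE mulr1.
Qed.

Lemma l1norm_stationary_lipschitz P : stochastic P -> irreducible P ->
  exists2 K, 0 <= K & forall Q u w, stationary Q u -> stationary P w ->
    l1norm (u - w) <= K * l1norm (u *m (Q - P)).
Proof.
move=> hP hirr; have /row_freeP[N MN] := row_free_stationary_system hP hirr.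
pose K := \sum_i \sum_j `|usubmx N i j|.
exists K => [|Q u w hu hw]; first by apply: sumr_ge0 => i _; apply: sumr_ge0.
have mu1 : (u - w) *m (const_mx 1 : 'M[R]_(n, 1)) = 0.
  apply/matrixP => i j; rewrite (ord1 i) (ord1 j) [RHS]mxE mxE.
  apply: etrans (stationary_mass0 hu hw); apply: eq_bigr => k _.
  by rewrite [const_mx _ _ _]mxE mulr1.
have -> : u - w = u *m (Q - P) *m usubmx N.
  rewrite -[LHS]mulmx1 -MN -{1}(vsubmxK N) mulmxA mul_mx_row mul_row_col mu1.
  rewrite mul0mx addr0; congr (_ *m _).
  by rewrite !mulmxBr !mulmxBl !mulmx1 hu.2 hw.2 opprB addrA subrK.
apply: l1norm_mulmx_le => i.
by rewrite /K [leRHS](bigD1 i) //= lerDl; apply: sumr_ge0 => k _; apply: sumr_ge0.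
Qed.

Lemma l1norm_mpowB A B v (c : R) t :
  stochastic A -> stochastic B -> is_distr v ->
  (forall i, \sum_j `|(A - B) i j| <= c) ->
  l1norm (v *m mpow A t - v *m mpow B t) <= t%:R * c.
Proof.
move=> hA hB hv hc; elim: t => [|t IH]; first by rewrite subrr l1norm0 mul0r.
have -> : v *m mpow A t.+1 - v *m mpow B t.+1 =
   (v *m mpow A t - v *m mpow B t) *m A + (v *m mpow B t) *m (A - B).
  by rewrite !mpowS !mulmxA mulmxBl mulmxBr addrA subrK.
apply: le_trans (l1normD _ _) _; rewrite mulrSr mulrDl mul1r; apply: lerD.
  exact: le_trans (l1norm_stochastic_mulmx _ hA) IH.
rewrite -[c]mulr1 -(l1norm_distr (is_distr_mpow t hB hv)).
exact: l1norm_mulmx_le.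
Qed.

Lemma l1norm_mixed_contract B w eps T mu :
  stationary B w -> mixed_by B (eps / 2) T -> \sum_i mu 0 i = 0 ->
  l1norm (mu *m mpow B T) <= eps * l1norm mu.
Proof.
move=> hw hmix mu0.
have -> : mu *m mpow B T = mu *m (mpow B T - \matrix_(i, j) w 0 j).
  rewrite mulmxBr; apply/matrixP => i j; rewrite !mxE.
  under [X in _ = _ - X]eq_bigr do rewrite mxE.
  by rewrite -mulr_suml (ord1 i) mu0 mul0r subr0.
apply: l1norm_mulmx_le => x; under eq_bigr do rewrite !mxE.
have d_x : is_distr (delta_mx 0 x : 'rV[R]_n).
  split; first by move=> j; rewrite mxE ler0n.
  rewrite (bigD1 x) //= big1 ?addr0 ?mxE ?eqxx // => j /negbTE jx.
  by rewrite mxE jx andbF.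
have := hmix w hw _ d_x; rewrite /tv -rowE.
rewrite (eq_bigr (fun i => `|mpow B T x i - w 0 i|)) => [|i _]; last by rewrite mxE.
lra.
Qed.

Lemma l1norm_stationary_mixing A B u w eps T (c : R) :
  stochastic A -> stochastic B -> stationary A u -> stationary B w ->
  mixed_by B (eps / 2) T -> (forall i, \sum_j `|(A - B) i j| <= c) ->
  l1norm (u - w) <= T%:R * c + eps * l1norm (u - w).
Proof.
move=> hA hB hu hw hmix hc.
have E : u - w = (u *m mpow A T - u *m mpow B T) + (u - w) *m mpow B T.
  by rewrite mulmxBl (invariant_mpow _ hu.2) (invariant_mpow _ hw.2) addrA subrK.
rewrite {1}E; apply: le_trans (l1normD _ _) _; apply: lerD.
  by apply: l1norm_mpowB => //; case: hu.
exact: l1norm_mixed_contract hw hmix (stationary_mass0 hu hw).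
Qed.

Lemma stochastic_Pmix P0 P1 s :
  stochastic P0 -> stochastic P1 -> 0 <= s <= 1 -> stochastic (Pmix P0 P1 s).
Proof.
case=> a0 a1 [b0 b1] /andP[s0 s1]; split.
  by move=> i j; rewrite !mxE addr_ge0 // mulr_ge0 // subr_ge0.
move=> i; under eq_bigr do rewrite !mxE.
by rewrite big_split /= -!mulr_sumr a1 b1 !mulr1 subrK.
Qed.

Lemma Pmix0 P0 P1 : Pmix P0 P1 0 = P0.
Proof. by rewrite /Pmix subr0 scale1r scale0r addr0. Qed.

Lemma Pmix_row_dist P0 P1 s i : stochastic P0 -> stochastic P1 -> 0 <= s ->
  \sum_j `|(Pmix P0 P1 s - P0) i j| <= 2 * s.
Proof.
case=> a0 a1 [b0 b1] s0.
apply: le_trans (_ : \sum_j s * (P1 i j + P0 i j) <= _).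
  apply: ler_sum => j _; rewrite !mxE.
  have -> : (1 - s) * P0 i j + s * P1 i j - P0 i j = s * (P1 i j - P0 i j) by ring.
  rewrite normrM ger0_norm // ler_wpM2l //.
  by apply: le_trans (ler_normB _ _) _; rewrite !ger0_norm.
by rewrite -mulr_sumr big_split /= a1 b1 mulrC.
Qed.

Lemma tmix_ge0 P eps : (0 <= tmix P eps)%E.
Proof. by apply: le_ereal_inf_tmp => _ [T _ <-]; rewrite lee_fin ler0n. Qed.

Lemma tmix_le_sup P0 P1 eps s :
  0 <= s <= 1 -> (tmix (Pmix P0 P1 s) eps <= tmix_sup P0 P1 eps)%E.
Proof. by move=> s01; apply: ereal_sup_ubound; exists s. Qed.

Lemma mixed_by_le_tmix P eps (x : R) :
  (tmix P eps <= x%:E)%E -> exists2 T, mixed_by P eps T & T%:R <= x.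
Proof.
move=> hx; have [[T0 hT0]|none] := pselect (exists T, mixed_by P eps T); last first.
  suff : tmix P eps = +oo%E by move=> h; rewrite h in hx.
  rewrite /tmix (_ : [set _ | T in _]%classic = set0%classic) ?ereal_inf0 //.
  by apply/seteqP; split => // y [T hT _]; apply: none; exists T.
have exP : exists T, `[< mixed_by P eps T >] by exists T0; apply/asboolP.
case: (ex_minnP exP) => T /asboolP hT minT; exists T => //.
rewrite -lee_fin (le_trans _ hx) //; apply: le_ereal_inf_tmp => _ [T' hT' <-].
by rewrite lee_fin ler_nat minT //; apply/asboolP.
Qed.

Section Mixture.
Variables (P0 P1 : 'M[R]_n) (pi : R -> 'rV[R]_n).
Hypotheses (hP0 : stochastic P0) (hP1 : stochastic P1).
Hypothesis hpi : forall s, 0 <= s <= 1 -> stationary (Pmix P0 P1 s) (pi s).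

Let stationary0 : stationary P0 (pi 0).
Proof. by rewrite -(Pmix0 P0 P1); apply: hpi; rewrite lexx ler01. Qed.

Lemma l1norm_stationary_Pmix_le : irreducible P0 ->
  exists2 K, 0 <= K & forall s, 0 <= s <= 1 -> l1norm (pi s - pi 0) <= K * s.
Proof.
move=> hirr; have [K K0 lipK] := l1norm_stationary_lipschitz hP0 hirr.
exists (K * 2) => [|s s01]; first exact: mulr_ge0.
apply: le_trans (lipK _ _ _ (hpi s01) stationary0) _.
have [s0 _] := andP s01; rewrite -mulrA ler_wpM2l //.
apply: le_trans (l1norm_mulmx_le (pi s) (fun i => Pmix_row_dist i hP0 hP1 s0)) _.
by rewrite l1norm_distr ?mulr1 //; case: (hpi s01).
Qed.

Lemma l1norm_stationary_Pmix_mixing eps T s : 0 <= s <= 1 ->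
  mixed_by P0 (eps / 2) T -> (1 - eps) * l1norm (pi s - pi 0) <= 2 * s * T%:R.
Proof.
move=> s01 hT.
have := l1norm_stationary_mixing (stochastic_Pmix hP0 hP1 s01) hP0 (hpi s01)
  stationary0 hT (fun i => Pmix_row_dist i hP0 hP1 (andP s01).1).
lra.
Qed.

Lemma tv_stationary_Pmix_continuous : irreducible P0 ->
  forall e, 0 < e -> exists2 d, 0 < d &
    forall s, 0 <= s <= 1 -> s < d -> tv (pi s) (pi 0) < e.
Proof.
move=> hirr e e0; have [K K0 leK] := l1norm_stationary_Pmix_le hirr.
exists (e / (K + 1)) => [|s s01]; first by rewrite divr_gt0 //; lra.
rewrite ltr_pdivlMr ?tvE; last by lra.
have := leK s s01; have [s0 _] := andP s01; nra.
Qed.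

Lemma tv_stationary_Pmix_le_delta (eps s : R) :
  0 < eps -> eps < (Num.sqrt n%:R)^-1 -> 0 <= s <= 1 ->
  (s%:E <= delta P0 P1 eps)%E -> tv (pi s) (pi 0) <= eps / 2.
Proof.
move=> eps0 eps_lt s01 hd; have [s0 _] := andP s01.
set q := Num.sqrt n%:R in eps_lt hd.
(* [0^-1 = 0], so the bound on [eps] rules out [n = 0]. *)
have n1 : 1 <= n%:R :> R.
  rewrite ler1n lt0n; apply/negP => /eqP n0.
  by move: eps_lt; rewrite /q n0 sqrtr0 invr0; lra.
have q1 : 1 <= q by rewrite /q -[X in X <= _]sqrtr1 ler_sqrt.
have q_eps : q * eps < 1.
  have q0 : 0 < q by lra.
  by have := eps_lt; rewrite -(ltr_pM2l q0 eps) mulfV ?gt_eqF.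
have eps1 : eps < 1 by nra.
have l1_ge0 := l1norm_ge0 (pi s - pi 0).
have tmix0 : (tmix P0 (eps / 2) <= tmix_sup P0 P1 (eps / 2))%E.
  by rewrite -{1}(Pmix0 P0 P1); apply: tmix_le_sup; rewrite lexx ler01.
rewrite tvE; move: hd; rewrite /delta.
case: (tmix_sup P0 P1 (eps / 2)) tmix0 => [t | | ] tmix0 hd; last first.
- by have := le_trans (tmix_ge0 P0 (eps / 2)) tmix0.
- have -> : s = 0 by move: hd; rewrite lee_fin; lra.
  by rewrite subrr l1norm0; lra.
have [T hT Tt] := mixed_by_le_tmix tmix0.
have key := l1norm_stationary_Pmix_mixing s01 hT.
have sT : s * T%:R <= s * t by rewrite ler_wpM2l.
have [t0 | t_neq0] := eqVneq t 0; first by rewrite t0 mulr0 in sT; nra.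
have t_gt0 : 0 < t by rewrite lt_def t_neq0 (le_trans _ Tt).
move: hd; rewrite (negbTE t_neq0) lee_fin -/q ler_pdivlMr; last first.
  by rewrite !mulr_gt0 //; lra.
have nq : 1 <= n%:R * q by nra.
have st0 : 0 <= s * t by rewrite mulr_ge0 // ltW.
nra.
Qed.

End Mixture.

End StationaryPerturbation.

Theorem corollary1 (R : realType) (n : nat) (P0 P1 : 'M[R]_n)
  (pi : R -> 'rV[R]_n)
  (hP0 : irred_aperiodic_chain P0) (hP1 : irred_aperiodic_chain P1)
  (hpi : forall s : R, 0 <= s <= 1 -> stationary (Pmix P0 P1 s) (pi s)) :
  (forall e : R, 0 < e -> exists2 d : R, 0 < d &
     forall s : R, 0 <= s <= 1 -> s < d -> tv (pi s) (pi 0) < e)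
  /\
  (forall eps : R, 0 < eps -> eps < (Num.sqrt n%:R)^-1 ->
     forall s : R, 0 <= s <= 1 -> (s%:E <= delta P0 P1 eps)%E ->
       tv (pi s) (pi 0) <= eps / 2).
Proof.
have [[stoch0 [irr0 _]] [stoch1 _]] := (hP0, hP1).
split; first exact: tv_stationary_Pmix_continuous stoch0 stoch1 hpi irr0.
move=> eps eps0 eps_lt s s01 hd.
exact (tv_stationary_Pmix_le_delta stoch0 stoch1 hpi eps0 eps_lt s01 hd).
Qed.
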